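(* Let $W,V$ be subspaces of $\mathbb{R}^n$ with $\mathbb{R}^n=W\oplus V^\perp$, where $W$ has dimension $d_W$. Suppose $\mu\in\mathcal{P}_2(W)$ is a probabilistic frame for $W$ with frame operator $\mathbf{S}_\mu$, and $T:W\to V$ is measurable such that $T_\#\mu$ is an oblique dual probabilistic frame of $\mu$ on $V$ with respect to the coupling $(\mathbf{Id},T)_\#\mu$, i.e. $T_\#\mu\in\mathcal{P}_2(V)$ and $\int_W\mathbf{x}\,T(\mathbf{x})^t\,d\mu(\mathbf{x})=\boldsymbol{\pi}_{WV^\perp}$. Then $$\int_W\int_W|\langle\mathbf{x},T(\mathbf{y})\rangle|^2\,d\mu(\mathbf{x})\,d\mu(\mathbf{y})\ge d_W,$$ and equality holds if and only if $T(\mathbf{y})=\boldsymbol{\pi}_{VW^\perp}\mathbf{S}_\mu^\dagger\mathbf{y}$ for $\mu$-almost all $\mathbf{y}\in W$.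
   Context: $\mathcal{P}_2(S)$ denotes Borel probability measures on $\mathbb{R}^n$ concentrated on the subspace $S$ with finite second moment. $\mu\in\mathcal{P}_2(W)$ is a probabilistic frame for $W$ if there exist $0<A\le B<\infty$ with $A\|\mathbf{x}\|^2\le\int_W|\langle\mathbf{x},\mathbf{y}\rangle|^2d\mu(\mathbf{y})\le B\|\mathbf{x}\|^2$ for all $\mathbf{x}\in W$; its frame operator is $\mathbf{S}_\mu=\int_W\mathbf{y}\mathbf{y}^td\mu(\mathbf{y})$, with Moore–Penrose inverse $\mathbf{S}_\mu^\dagger$. $T_\#\mu(E)=\mu(T^{-1}(E))$; $(\mathbf{Id},T)_\#\mu$ is the pushforward of $\mu$ under $\mathbf{x}\mapsto(\mathbf{x},T(\mathbf{x}))$. $\boldsymbol{\pi}_{WV^\perp}$ is the oblique projection onto $W$ along $V^\perp$ and $\boldsymbol{\pi}_{VW^\perp}$ the oblique projection onto $V$ along $W^\perp$. *)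

From HB Require Import structures.
From mathcomp Require Import all_boot all_order all_algebra.
From mathcomp Require Import all_classical all_reals all_analysis.

Set Implicit Arguments.
Unset Strict Implicit.
Unset Printing Implicit Defensive.

Import Order.TTheory GRing.Theory Num.Theory.
Import numFieldNormedType.Exports.
Local Open Scope classical_set_scope.
Local Open Scope ring_scope.

(* R^n is modelled by column vectors 'cV[R]_n, equipped with its Borel
   sigma-algebra (generated by the open sets of the product topology). *)
Definition Rn (R : realType) (n : nat) :=
  g_sigma_algebraType (@open 'M[R]_(n, 1)).

Definition dotv (R : realType) (n : nat) (x y : 'cV[R]_n) : R :=
  \sum_(i < n) x i 0 * y i 0.

Definition orth (R : realType) (n : nat) (V : {vspace 'cV[R]_n}) : set 'cV[R]_n :=
  [set x | forall v, v \in V -> dotv x v = 0].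

Definition direct_sum_whole (R : realType) (n : nat)
    (W : {vspace 'cV[R]_n}) (U : set 'cV[R]_n) : Prop :=
  (forall z : 'cV[R]_n, exists w u, w \in W /\ U u /\ z = w + u) /\
  (forall x : 'cV[R]_n, x \in W -> U x -> x = 0).

Definition oblique_proj (R : realType) (n : nat)
    (P : 'M[R]_n) (W : {vspace 'cV[R]_n}) (U : set 'cV[R]_n) : Prop :=
  forall z : 'cV[R]_n, (P *m z) \in W /\ U (z - P *m z).

Definition moore_penrose (R : realType) (n : nat) (A Ad : 'M[R]_n) : Prop :=
  [/\ A *m Ad *m A = A, Ad *m A *m Ad = Ad,
      (A *m Ad)^T = A *m Ad & (Ad *m A)^T = Ad *m A].

Definition mx_integral (R : realType) (n : nat)
    (mu : {measure set (Rn R n) -> \bar R}) (D : set (Rn R n))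
    (f : Rn R n -> 'M[R]_n) : 'M[R]_n :=
  \matrix_(i, j) Rintegral mu D (fun x => f x i j).

Definition in_P2 (R : realType) (n : nat) (mu : probability (Rn R n) R)
    (W : {vspace 'cV[R]_n}) : Prop :=
  mu [set x : Rn R n | x \in W] = 1%E /\
  mu.-integrable setT (fun y : Rn R n => (dotv y y)%:E).

Definition prob_frame (R : realType) (n : nat) (mu : probability (Rn R n) R)
    (W : {vspace 'cV[R]_n}) : Prop :=
  exists A B : R, 0 < A /\ A <= B /\
    forall x : 'cV[R]_n, x \in W ->
      ((A * dotv x x)%:E <= \int[mu]_(y in [set y : Rn R n | y \in W]) ((dotv x y) ^+ 2)%:E)%E /\
      (\int[mu]_(y in [set y : Rn R n | y \in W]) ((dotv x y) ^+ 2)%:E <= (B * dotv x x)%:E)%E.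

Definition frame_op (R : realType) (n : nat) (mu : probability (Rn R n) R)
    (W : {vspace 'cV[R]_n}) : 'M[R]_n :=
  mx_integral mu [set y : Rn R n | y \in W] (fun y => y *m y^T).

From HB Require Import structures.
From mathcomp Require Import all_boot all_order all_algebra.
From mathcomp Require Import all_classical all_reals all_analysis.
From mathcomp Require Import measurable_realfun lra ring.

Import Order.TTheory GRing.Theory Num.Theory.
Import numFieldNormedType.Exports.
Local Open Scope classical_set_scope.
Local Open Scope ring_scope.

(* Write S for the frame operator and a(y) = pi_{VW^perp} S^+ y.  The inner
   integral is the S-quadratic form of T(y), and since S a(y) = y for y in W,
   expanding the S-quadratic form of T(y) - a(y) gives
     int (T - a)^t S (T - a) dmu = int int <x, T y>^2 - 2 int <T y, y> + int <y, S^+ y>.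
   The last two integrals are traces equal to dim W: int y T(y)^t = pi_{WV^perp}
   by duality, and tr (S^+ S) = tr pi_{WV^perp} because S S^+ fixes W.  The
   defect on the left is nonnegative, and the form is definite on V, which
   contains T(y) - a(y): S is definite on W by the lower frame bound, and
   V meets W^perp trivially since R^n = W (+) V^perp.  Hence equality holds iff
   T = a mu-almost everywhere on W. *)

Set Implicit Arguments.
Unset Strict Implicit.
Unset Printing Implicit Defensive.

Section dotv.
Variables (R : realType) (n : nat).
Implicit Types (x y z : 'cV[R]_n) (M : 'M[R]_n).

Lemma dotvC x y : dotv x y = dotv y x.
Proof. by apply: eq_bigr => i _; rewrite mulrC. Qed.

Lemma dotvE x y : dotv x y = (x^T *m y) 0 0.
Proof. by rewrite mxE; apply: eq_bigr => i _; rewrite mxE. Qed.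

Lemma dotv_mxtrace x y : dotv x y = \tr (y *m x^T).
Proof. by rewrite mxtrace_mulC trace_mx11 dotvE. Qed.

Lemma dotv_mulmxl M x y : dotv x (M *m y) = dotv (M^T *m x) y.
Proof. by rewrite !dotvE trmx_mul trmxK mulmxA. Qed.

Lemma dotvDr x y z : dotv x (y + z) = dotv x y + dotv x z.
Proof. by rewrite !dotvE mulmxDr mxE. Qed.

Lemma dotvBl x y z : dotv (x - y) z = dotv x z - dotv y z.
Proof. by rewrite !dotvE linearB /= mulmxBl mxE [X in _ + X]mxE. Qed.

Lemma dotvBr x y z : dotv x (y - z) = dotv x y - dotv x z.
Proof. by rewrite dotvC dotvBl !(dotvC x). Qed.

Lemma dotv0r x : dotv x 0 = 0.
Proof. by rewrite dotvE mulmx0 mxE. Qed.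

Lemma dotv_delta x i : dotv x (delta_mx i 0) = x i 0.
Proof. by rewrite dotvE -colE !mxE. Qed.

Lemma dotv_ge0 x : 0 <= dotv x x.
Proof. by apply: sumr_ge0 => i _; rewrite -expr2 sqr_ge0. Qed.

Lemma dotv_eq0 x : (dotv x x == 0) = (x == 0).
Proof.
apply/idP/eqP => [|->]; last by rewrite dotv0r.
rewrite psumr_eq0 => [/allP x0|i _]; last by rewrite -expr2 sqr_ge0.
apply/matrixP => i j; rewrite (ord1 j) mxE.
by have /implyP/(_ isT) := x0 i (mem_index_enum i); rewrite -expr2 sqrf_eq0 => /eqP.
Qed.

Lemma sqr_coord_le_dotv x i : x i 0 ^+ 2 <= dotv x x.
Proof.
rewrite /dotv (bigD1 i) //= -expr2 lerDl.
by apply: sumr_ge0 => j _; rewrite -expr2 sqr_ge0.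
Qed.

End dotv.

Section oblique_projection.
Variables (R : realType) (n : nat).
Implicit Types (W V : {vspace 'cV[R]_n}) (P : 'M[R]_n).

Lemma oblique_proj_id W (U : set 'cV[R]_n) P w :
  direct_sum_whole W U -> oblique_proj P W U -> w \in W -> P *m w = w.
Proof.
move=> [_ WU0] hP wW; have [PwW Pw_U] := hP w.
by apply/esym/eqP; rewrite -subr_eq0; apply/eqP/WU0 => //; rewrite memvB.
Qed.

Lemma oblique_proj_orth_trmx W V P x :
  oblique_proj P V (orth W) -> x \in W -> P^T *m x = x.
Proof.
move=> hP xW; apply/matrixP => i j; rewrite (ord1 j).
have [_ /(_ x xW)] := hP (delta_mx i 0).
rewrite dotvBl (dotvC (P *m _)) dotv_mulmxl => /eqP; rewrite subr_eq0.
by rewrite dotvC !dotv_delta => /eqP.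
Qed.

Lemma direct_sum_orth_cap0 W V z :
  direct_sum_whole W (orth V) -> z \in V -> orth W z -> z = 0.
Proof.
move=> [WVo _] zV zW; have [w [u [wW [uV zE]]]] := WVo z.
apply/eqP; rewrite -dotv_eq0 {2}zE dotvDr zW // add0r dotvC.
exact/eqP/uV.
Qed.

End oblique_projection.

Lemma mxtrace_proj_vspace (R : fieldType) n (W : {vspace 'cV[R]_n}) (P : 'M[R]_n) :
  (forall z, P *m z \in W) -> (forall w, w \in W -> P *m w = w) ->
  \tr P = (\dim W)%:R.
Proof.
move=> PW Pid; set b := vbasis W.
pose B : 'M[R]_(n, \dim W) := \matrix_(i, k) b`_k i 0.
pose C : 'M[R]_(\dim W, n) :=
  \matrix_(k, j) coord b k (P *m (delta_mx j 0 : 'cV_n)).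
have bW (k : 'I_(\dim W)) : b`_k \in W.
  by apply: vbasis_mem; apply: mem_nth; rewrite size_tuple.
have BC : B *m C = P.
  apply/matrixP => i j; have -> : P i j = (P *m (delta_mx j 0 : 'cV_n)) i 0.
    by rewrite -colE mxE.
  rewrite {1}(coord_vbasis (PW (delta_mx j 0 : 'cV_n))) summxE !mxE.
  by apply: eq_bigr => k _; rewrite !mxE mulrC.
have CB : C *m B = 1%:M.
  apply/matrixP => k l; rewrite !mxE.
  have -> : \sum_j C k j * B j l = coord b k (P *m b`_l).
    rewrite [X in _ *m X]matrix_sum_delta mulmx_sumr linear_sum /=.
    apply: eq_bigr => j _; rewrite big_ord1 -scalemxAr linearZ /=.
    by rewrite !mxE mulrC.
  by rewrite Pid // coord_free ?(basis_free (vbasisP W)) // eq_sym.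
by rewrite -BC mxtrace_mulC CB mxtrace1.
Qed.

Section symmetric_pinv.
Variables (R : realType) (n : nat) (S Sd : 'M[R]_n).
Hypotheses (S_sym : S^T = S) (hSd : moore_penrose S Sd).

Lemma sym_pinv_mulmxK : S *m S *m Sd = S.
Proof.
case: hSd => SSdS _ SSd_sym _; rewrite -mulmxA.
have SSdTS : S *m (Sd^T *m S) = S.
  by have := congr1 trmx SSdS; rewrite !trmx_mul S_sym.
by rewrite -SSd_sym trmx_mul S_sym.
Qed.

End symmetric_pinv.

Lemma qform_sub_pinv (R : realType) n (S Sd P : 'M[R]_n) (y t : 'cV[R]_n) :
  S^T = S -> S *m P = S -> S *m (Sd *m y) = y -> P^T *m y = y ->
  let a := P *m (Sd *m y) in
  dotv (t - a) (S *m (t - a)) =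
  dotv t (S *m t) - 2 * dotv t y + dotv y (Sd *m y).
Proof.
move=> S_sym SP SSdy Py a.
have Sa : S *m a = y by rewrite mulmxA SP.
have aS u : dotv a (S *m u) = dotv y u by rewrite dotv_mulmxl S_sym Sa.
rewrite mulmxBr Sa !dotvBl !dotvBr aS (dotvC y t) (dotvC a y).
rewrite [dotv y a]dotv_mulmxl Py; ring.
Qed.

Section real_integrals.
Context d (T : measurableType d) (R : realType).
Variables (mu : {measure set T -> \bar R}) (D : set T).
Hypothesis mD : measurable D.
Implicit Types f g : T -> R.

Lemma EFin_Rintegral f : mu.-integrable D (EFin \o f) ->
  (\int[mu]_(x in D) (f x)%:E)%E = (\int[mu]_(x in D) f x)%:E.
Proof. by move=> fi; rewrite fineK //; exact: integrable_fin_num. Qed.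

Lemma integrable_sumr (I : Type) (s : seq I) (P : pred I) (F : I -> T -> R) :
  (forall i, mu.-integrable D (EFin \o F i)) ->
  mu.-integrable D (EFin \o fun x => \sum_(i <- s | P i) F i x).
Proof.
move=> Fi; apply: (eq_integrable mD _ _ _ (integrable_sum mD s (fun i _ => Fi i))).
by move=> x _; rewrite /= sumEFin.
Qed.

Lemma integrable_scaler (r : R) f : mu.-integrable D (EFin \o f) ->
  mu.-integrable D (EFin \o fun x => r * f x).
Proof.
by move=> fi; apply: (eq_integrable mD _ _ _ (integrableZl mD r fi)) => x _.
Qed.

Lemma Rintegral_sum (I : Type) (s : seq I) (P : pred I) (F : I -> T -> R) :
  (forall i, mu.-integrable D (EFin \o F i)) ->
  \int[mu]_(x in D) (\sum_(i <- s | P i) F i x) =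
  \sum_(i <- s | P i) \int[mu]_(x in D) F i x.
Proof.
move=> Fi; elim: s => [|i s IHs].
  by under eq_Rintegral do rewrite big_nil; rewrite big_nil /Rintegral integral0.
under eq_Rintegral do rewrite big_cons; rewrite big_cons.
case: (P i); last exact: IHs.
by rewrite RintegralD ?IHs //; exact: integrable_sumr.
Qed.

Lemma integrable_mul_of_sqr f g :
  measurable_fun D f -> measurable_fun D g ->
  mu.-integrable D (EFin \o fun x => f x ^+ 2) ->
  mu.-integrable D (EFin \o fun x => g x ^+ 2) ->
  mu.-integrable D (EFin \o fun x => f x * g x).
Proof.
move=> mf mg f2i g2i.
apply: (le_integrable mD _ _ (integrableD mD f2i g2i)) => [|x _].
  exact/measurable_EFinP/measurable_funM.
rewrite /= lee_fin normrM [X in _ <= X]ger0_norm ?addr_ge0 ?sqr_ge0 //.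
rewrite -[f x ^+ 2]real_normK ?num_real // -[g x ^+ 2]real_normK ?num_real //.
have := sqr_ge0 (`|f x| - `|g x|).
have := normr_ge0 (f x); have := normr_ge0 (g x).
by move: `|f x| `|g x| => a b; nra.
Qed.

Lemma Rintegral_eq0_ae f : mu.-integrable D (EFin \o f) ->
  (forall x, D x -> 0 <= f x) ->
  \int[mu]_(x in D) f x = 0 <-> {ae mu, forall x, D x -> f x = 0}.
Proof.
move=> fi f_ge0.
have int_abs : (\int[mu]_(x in D) `|(f x)%:E| = (\int[mu]_(x in D) f x)%:E)%E.
  rewrite -EFin_Rintegral //; apply: eq_integral => x /[!inE] Dx.
  by rewrite /= ger0_norm // f_ge0.
have -> : \int[mu]_(x in D) f x = 0 <-> (\int[mu]_(x in D) `|(f x)%:E| = 0)%E.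
  by rewrite int_abs; split => [->|[]].
rewrite (ae_eq_integral_abs mu mD (measurable_int _ fi)).
split; apply: filterS => x fx0 Dx; first by have /= [] := fx0 Dx.
by rewrite /= fx0.
Qed.

End real_integrals.

Section euclidean_borel.
Variables (R : realType) (n : nat).

Lemma measurable_coord (i : 'I_n) (j : 'I_1) :
  measurable_fun setT (fun x : Rn R n => x i j).
Proof.
apply: (measurability _ (RGenOpens.measurableE R)) => _ [_ [a [b ->]] <-].
rewrite setTI; apply: sub_sigma_algebra.
apply: (@open_comp _ _ (fun y : 'M[R]_(n, 1) => y i j)); last exact: interval_open.
by move=> y _; exact: coord_continuous.
Qed.

Lemma measurable_fixpoints (P : 'M[R]_n) :
  measurable [set x : Rn R n | P *m x = x].
Proof.
pose f (x : Rn R n) := dotv (P *m x - x) (P *m x - x).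
have mPx i : measurable_fun setT (fun x : Rn R n => (P *m x - x) i 0).
  under eq_fun do rewrite !mxE.
  apply: measurable_funB; last exact: measurable_coord.
  apply: measurable_sum => k; apply: measurable_funM => //.
  exact: measurable_coord.
have mf : measurable_fun setT f.
  by apply: measurable_sum => i; apply: measurable_funM.
have -> : [set x : Rn R n | P *m x = x] = f @^-1` [set 0].
  apply/seteqP; split => x; rewrite /= /f; first by move=> ->; rewrite subrr dotv0r.
  by move/eqP; rewrite dotv_eq0 subr_eq0 => /eqP.
by rewrite -[_ @^-1` _]setTI; exact: mf.
Qed.

End euclidean_borel.

Section matrix_integral.
Variables (R : realType) (n : nat).
Variables (mu : {measure set (Rn R n) -> \bar R}) (D : set (Rn R n)).
Hypothesis mD : measurable D.
Implicit Types (F G : Rn R n -> 'M[R]_n) (f g : Rn R n -> 'cV[R]_n).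

Definition mx_integrable F :=
  forall i j, mu.-integrable D (EFin \o fun x => F x i j).

Lemma eq_mx_integral F G :
  {in D, F =1 G} -> mx_integral mu D F = mx_integral mu D G.
Proof.
by move=> FG; apply/matrixP => i j; rewrite !mxE; apply: eq_Rintegral => x /FG ->.
Qed.

Lemma mx_integrable_mull (A : 'M[R]_n) F :
  mx_integrable F -> mx_integrable (fun x => A *m F x).
Proof.
move=> Fi i j; apply: (eq_integrable mD (EFin \o fun x => \sum_k A i k * F x k j)).
  by move=> x _; rewrite /= mxE.
by apply: integrable_sumr => // k; exact: integrable_scaler.
Qed.

Lemma mx_integral_mull (A : 'M[R]_n) F : mx_integrable F ->
  mx_integral mu D (fun x => A *m F x) = A *m mx_integral mu D F.
Proof.
move=> Fi; apply/matrixP => i j; rewrite !mxE.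
under eq_Rintegral do rewrite mxE.
rewrite Rintegral_sum // => [|k]; last exact: integrable_scaler.
by apply: eq_bigr => k _; rewrite mxE RintegralZl.
Qed.

Lemma integrable_mxtrace F :
  mx_integrable F -> mu.-integrable D (EFin \o fun x => \tr (F x)).
Proof. by move=> Fi; apply: integrable_sumr. Qed.

Lemma Rintegral_mxtrace F : mx_integrable F ->
  \int[mu]_(x in D) \tr (F x) = \tr (mx_integral mu D F).
Proof.
by move=> Fi; rewrite Rintegral_sum //; apply: eq_bigr => i _; rewrite mxE.
Qed.

Lemma mx_integrable_outer f g :
  (forall i, measurable_fun D (fun x => f x i 0)) ->
  (forall i, measurable_fun D (fun x => g x i 0)) ->
  mu.-integrable D (fun x => (dotv (f x) (f x))%:E) ->
  mu.-integrable D (fun x => (dotv (g x) (g x))%:E) ->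
  mx_integrable (fun x => f x *m (g x)^T).
Proof.
move=> mf mg f2 g2 i j.
have sqr_coord_int (h : Rn R n -> 'cV[R]_n) i' :
    measurable_fun D (fun x => h x i' 0) ->
    mu.-integrable D (fun x => (dotv (h x) (h x))%:E) ->
    mu.-integrable D (EFin \o fun x => h x i' 0 ^+ 2).
  move=> mh h2; apply: (le_integrable mD _ _ h2) => [|x _].
    exact/measurable_EFinP/measurable_funX.
  by rewrite /= !ger0_norm ?lee_fin ?sqr_ge0 ?dotv_ge0 ?sqr_coord_le_dotv.
apply: (eq_integrable mD (EFin \o fun x => f x i 0 * g x j 0)).
  by move=> x _; rewrite /= !mxE big_ord1 mxE.
by apply: integrable_mul_of_sqr => //; exact: sqr_coord_int.
Qed.

Lemma integrable_dotv_mulmx (M : 'M[R]_n) f g :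
  mx_integrable (fun x => g x *m (f x)^T) ->
  mu.-integrable D (EFin \o fun x => dotv (f x) (M *m g x)).
Proof.
move=> gfi; have := integrable_mxtrace (mx_integrable_mull M gfi).
by apply: eq_integrable => // x _; rewrite /= dotv_mxtrace mulmxA.
Qed.

Lemma Rintegral_dotv_mulmx (M : 'M[R]_n) f g :
  mx_integrable (fun x => g x *m (f x)^T) ->
  \int[mu]_(x in D) dotv (f x) (M *m g x) =
  \tr (M *m mx_integral mu D (fun x => g x *m (f x)^T)).
Proof.
move=> gfi; rewrite -mx_integral_mull // -Rintegral_mxtrace.
  by apply: eq_Rintegral => x _; rewrite dotv_mxtrace mulmxA.
exact: mx_integrable_mull.
Qed.

Lemma integrable_dotv f g : mx_integrable (fun x => g x *m (f x)^T) ->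
  mu.-integrable D (EFin \o fun x => dotv (f x) (g x)).
Proof.
move=> gfi; apply: (eq_integrable mD _ _ _ (integrable_dotv_mulmx 1 gfi)).
by move=> x _; rewrite /= mul1mx.
Qed.

Lemma Rintegral_dotv f g : mx_integrable (fun x => g x *m (f x)^T) ->
  \int[mu]_(x in D) dotv (f x) (g x) =
  \tr (mx_integral mu D (fun x => g x *m (f x)^T)).
Proof.
move=> gfi; rewrite -[mx_integral _ _ _]mul1mx -Rintegral_dotv_mulmx //.
by apply: eq_Rintegral => x _; rewrite mul1mx.
Qed.

End matrix_integral.

Section frame_operator.
Variables (R : realType) (n : nat) (W V : {vspace 'cV[R]_n}) (PWV PVW : 'M[R]_n).
Variable mu : probability (Rn R n) R.
Hypotheses (hWV : direct_sum_whole W (orth V))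
  (hPWV : oblique_proj PWV W (orth V)) (hPVW : oblique_proj PVW V (orth W)).
Hypotheses (mu_L2 : mu.-integrable setT (fun y : Rn R n => (dotv y y)%:E))
  (hframe : prob_frame mu W).

Local Notation D := [set x : Rn R n | x \in W].
Local Notation S := (frame_op mu W).

Lemma measurable_vspace : measurable D.
Proof.
rewrite (_ : D = [set x | PWV *m x = x]); first exact: measurable_fixpoints.
apply/seteqP; split => x /=; first exact: oblique_proj_id hWV hPWV.
by move=> <-; case: (hPWV x).
Qed.

Lemma mx_integrable_frame : mx_integrable mu D (fun x => x *m x^T).
Proof.
have mD := measurable_vspace.
have m_id i : measurable_fun D (fun x : Rn R n => x i 0).
  exact: measurable_funS (measurable_coord i 0).
by apply: mx_integrable_outer => //; exact: integrableS mu_L2.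
Qed.

Lemma frame_op_sym : S^T = S.
Proof.
apply/matrixP => i j; rewrite !mxE; apply: eq_Rintegral => x _.
by rewrite !mxE !big_ord1 !mxE mulrC.
Qed.

Lemma frame_op_qform z :
  (\int[mu]_(x in D) ((dotv x z) ^+ 2)%:E)%E = (dotv z (S *m z))%:E.
Proof.
have mD := measurable_vspace.
have sqr_dotv x : (dotv x z) ^+ 2 = dotv x ((z *m z^T) *m x).
  by rewrite -mulmxA [RHS]dotvE mulmxA mxE big_ord1 -!dotvE expr2 (dotvC z).
under eq_integral do rewrite sqr_dotv.
rewrite EFin_Rintegral //; last exact: integrable_dotv_mulmx mx_integrable_frame.
rewrite Rintegral_dotv_mulmx //; last exact: mx_integrable_frame.
by rewrite -mulmxA mxtrace_mulC trace_mx11 -mulmxA -dotvE.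
Qed.

Lemma frame_op_qform_ge0 z : 0 <= dotv z (S *m z).
Proof.
rewrite -lee_fin -frame_op_qform.
by apply: integral_ge0 => x _; rewrite lee_fin sqr_ge0.
Qed.

Lemma frame_op_qform_eq0W w : w \in W -> dotv w (S *m w) = 0 -> w = 0.
Proof.
move=> wW wSw0; case: hframe => A [B [A0 [_ /(_ w wW) [lb _]]]].
have Sw : (\int[mu]_(y in D) ((dotv w y) ^+ 2)%:E)%E = (dotv w (S *m w))%:E.
  by rewrite -frame_op_qform; apply: eq_integral => x _; rewrite dotvC.
move: lb; rewrite Sw wSw0 lee_fin pmulr_rle0 // => ww_le0.
by apply/eqP; rewrite -dotv_eq0 eq_le ww_le0 dotv_ge0.
Qed.

Lemma oblique_proj_mulmx_frame_op : PWV *m S = S.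
Proof.
rewrite -(mx_integral_mull measurable_vspace); last exact: mx_integrable_frame.
apply: eq_mx_integral => x /[!inE] xW.
by rewrite mulmxA (oblique_proj_id hWV hPWV xW).
Qed.

Lemma frame_op_mulmx_oblique_proj : S *m PVW = S.
Proof.
apply: trmx_inj; rewrite trmx_mul frame_op_sym.
rewrite -(mx_integral_mull measurable_vspace); last exact: mx_integrable_frame.
apply: eq_mx_integral => x /[!inE] xW.
by rewrite mulmxA (oblique_proj_orth_trmx hPVW xW).
Qed.

Variable Sd : 'M[R]_n.
Hypothesis hSd : moore_penrose S Sd.

Lemma frame_op_pinvK y : y \in W -> S *m (Sd *m y) = y.
Proof.
move=> yW; set u := y - S *m (Sd *m y).
have uW : u \in W.
  rewrite memvB // -oblique_proj_mulmx_frame_op -mulmxA; exact: (hPWV _).1.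
have Su : S *m u = 0.
  by rewrite mulmxBr !mulmxA (sym_pinv_mulmxK frame_op_sym hSd) subrr.
have : u = 0 by apply: frame_op_qform_eq0W => //; rewrite Su dotv0r.
by move/eqP; rewrite subr_eq0 => /eqP <-.
Qed.

Lemma mxtrace_pinv_frame_op : \tr (Sd *m S) = (\dim W)%:R.
Proof.
have PWV_W z : PWV *m z \in W := (hPWV z).1.
rewrite mxtrace_mulC -oblique_proj_mulmx_frame_op -mulmxA mxtrace_mulC.
have -> : S *m Sd *m PWV = PWV.
  apply/matrixP => i j.
  have entry_col (A : 'M[R]_n) : A i j = (A *m (delta_mx j 0 : 'cV_n)) i 0.
    by rewrite -colE mxE.
  by rewrite !entry_col -!mulmxA frame_op_pinvK.
exact: mxtrace_proj_vspace PWV_W (fun w => oblique_proj_id hWV hPWV).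
Qed.

Lemma frame_op_qform_eq0V z : z \in V -> dotv z (S *m z) = 0 -> z = 0.
Proof.
move=> zV zSz0; set w := S *m (Sd *m z).
have wW : w \in W.
  by rewrite /w -oblique_proj_mulmx_frame_op -mulmxA; exact: (hPWV _).1.
have dotv_w x : x \in W -> dotv x w = dotv x z.
  case: hSd => _ _ SSd_sym _ xW.
  by rewrite /w mulmxA dotv_mulmxl SSd_sym -mulmxA frame_op_pinvK.
have w0 : w = 0.
  apply: frame_op_qform_eq0W => //.
  have : (dotv w (S *m w))%:E = (dotv z (S *m z))%:E :> \bar R.
    by rewrite -!frame_op_qform; apply: eq_integral => x /[!inE] xW; rewrite dotv_w.
  by rewrite zSz0 => -[].
apply: (direct_sum_orth_cap0 hWV zV) => x xW.
by rewrite dotvC -dotv_w // w0 dotv0r.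
Qed.

Section dual_map.
Variable T : Rn R n -> Rn R n.
Hypotheses (hTmeas : measurable_fun D T) (hTV : forall x, x \in W -> T x \in V).
Hypotheses (hT2 : mu.-integrable D (fun x => (dotv (T x) (T x))%:E))
  (hdual : mx_integral mu D (fun x => x *m (T x)^T) = PWV).

Definition dual_defect (y : Rn R n) :=
  dotv (T y - PVW *m (Sd *m y)) (S *m (T y - PVW *m (Sd *m y))).

Lemma mx_integrable_dual : mx_integrable mu D (fun x => x *m (T x)^T).
Proof.
have mD := measurable_vspace.
have m_id i : measurable_fun D (fun x : Rn R n => x i 0).
  exact: measurable_funS (measurable_coord i 0).
have mT i : measurable_fun D (fun x => T x i 0).
  exact: measurableT_comp (measurable_coord i 0) hTmeas.
have L2 := integrableS measurableT mD (@subsetT _ D) mu_L2.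
exact: (mx_integrable_outer mD m_id mT L2 hT2).
Qed.

Lemma mx_integrable_TT : mx_integrable mu D (fun x => T x *m (T x)^T).
Proof.
have mT i : measurable_fun D (fun x => T x i 0).
  exact: measurableT_comp (measurable_coord i 0) hTmeas.
exact: (mx_integrable_outer measurable_vspace mT mT hT2 hT2).
Qed.

Lemma integral_frame_qform_dual :
  (\int[mu]_(y in D) \int[mu]_(x in D) ((dotv x (T y)) ^+ 2)%:E)%E =
  (\int[mu]_(y in D) dotv (T y) (S *m T y))%:E.
Proof.
have mD := measurable_vspace.
under eq_integral do rewrite frame_op_qform.
exact: (EFin_Rintegral mD (integrable_dotv_mulmx mD S mx_integrable_TT)).
Qed.

Lemma Rintegral_dual_pairing : \int[mu]_(y in D) dotv (T y) y = (\dim W)%:R.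
Proof.
rewrite Rintegral_dotv ?hdual; [|exact: measurable_vspace|exact: mx_integrable_dual].
exact: mxtrace_proj_vspace (fun z => (hPWV z).1) (fun w => oblique_proj_id hWV hPWV).
Qed.

Lemma Rintegral_pinv_qform : \int[mu]_(y in D) dotv y (Sd *m y) = (\dim W)%:R.
Proof.
rewrite Rintegral_dotv_mulmx; first exact: mxtrace_pinv_frame_op.
  exact: measurable_vspace.
exact: mx_integrable_frame.
Qed.

Lemma dual_defect_expand y : y \in W ->
  dual_defect y = dotv (T y) (S *m T y) - 2 * dotv (T y) y + dotv y (Sd *m y).
Proof.
move=> yW; apply: qform_sub_pinv; first exact: frame_op_sym.
- exact: frame_op_mulmx_oblique_proj.
- exact: frame_op_pinvK.
- exact: oblique_proj_orth_trmx hPVW yW.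
Qed.

Lemma Rintegral_dual_defect : mu.-integrable D (EFin \o dual_defect) /\
  \int[mu]_(y in D) dual_defect y =
  \int[mu]_(y in D) dotv (T y) (S *m T y) - (\dim W)%:R.
Proof.
have mD := measurable_vspace.
have qt_int := integrable_dotv_mulmx mD S mx_integrable_TT.
have pairing_int := integrable_dotv mD mx_integrable_dual.
have pinv_int := integrable_dotv_mulmx mD Sd mx_integrable_frame.
have lin_int : mu.-integrable D
    (EFin \o fun y => dotv (T y) (S *m T y) - 2 * dotv (T y) y).
  have := integrableB mD qt_int (integrable_scaler mD 2 pairing_int).
  by apply: eq_integrable => // y _; rewrite /= EFinB.
split.
  apply: (eq_integrable mD _ _ _ (integrableD mD lin_int pinv_int)) => y /[!inE] yW.
  by rewrite /= dual_defect_expand // EFinD.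
rewrite (eq_Rintegral _ (fun y yW => dual_defect_expand (set_mem yW))).
rewrite RintegralD // RintegralB ?RintegralZl ?integrable_scaler //.
by rewrite Rintegral_dual_pairing Rintegral_pinv_qform; ring.
Qed.

Lemma dual_defect_eq0_ae :
  {ae mu, forall y, D y -> dual_defect y = 0} <->
  {ae mu, forall y : Rn R n, y \in W -> T y = PVW *m (Sd *m y)}.
Proof.
split; apply: filterS => y Hy yW; last first.
  by rewrite /dual_defect (Hy yW) subrr mulmx0 dotv0r.
apply/eqP; rewrite -subr_eq0; apply/eqP/frame_op_qform_eq0V; last exact: Hy.
by rewrite memvB ?hTV //; case: (hPVW (Sd *m y)).
Qed.

End dual_map.

End frame_operator.

Theorem theorem5p3 (R : realType) (n : nat)
    (W V : {vspace 'cV[R]_n})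
    (hWV : direct_sum_whole W (orth V))
    (PWV : 'M[R]_n) (hPWV : oblique_proj PWV W (orth V))
    (PVW : 'M[R]_n) (hPVW : oblique_proj PVW V (orth W))
    (mu : probability (Rn R n) R)
    (hmu : in_P2 mu W) (hframe : prob_frame mu W)
    (Sd : 'M[R]_n) (hSd : moore_penrose (frame_op mu W) Sd)
    (T : Rn R n -> Rn R n)
    (hTmeas : measurable_fun [set x : Rn R n | x \in W] T)
    (hTV : forall x : 'cV[R]_n, x \in W -> T x \in V)
    (hT2 : mu.-integrable [set x : Rn R n | x \in W] (fun x => (dotv (T x) (T x))%:E))
    (hdual : mx_integral mu [set x : Rn R n | x \in W] (fun x => x *m (T x)^T) = PWV) :
  ((\dim W)%:R%:E <=
     \int[mu]_(y in [set y : Rn R n | y \in W])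
       (\int[mu]_(x in [set x : Rn R n | x \in W]) ((dotv x (T y)) ^+ 2)%R%:E)%E)%E /\
  ((\int[mu]_(y in [set y : Rn R n | y \in W])
       (\int[mu]_(x in [set x : Rn R n | x \in W]) ((dotv x (T y)) ^+ 2)%R%:E)%E)%E
     = (\dim W)%:R%:E <->
   {ae mu, forall y : Rn R n, y \in W -> T y = PVW *m (Sd *m y)}).
Proof.
have mD := measurable_vspace hWV hPWV.
have [defect_int defect_E] :=
  Rintegral_dual_defect hWV hPWV hPVW hmu.2 hframe hSd hTmeas hT2 hdual.
have defect_ge0 y (_ : y \in W) : 0 <= dual_defect W PVW mu Sd T y :=
  frame_op_qform_ge0 hWV hPWV hmu.2 _.
rewrite (integral_frame_qform_dual hWV hPWV hmu.2 hTmeas hT2).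
split; first by rewrite lee_fin -subr_ge0 -defect_E; exact: Rintegral_ge0.
rewrite -(dual_defect_eq0_ae hWV hPWV hPVW hmu.2 hframe hSd hTV).
rewrite -(Rintegral_eq0_ae mD defect_int defect_ge0) defect_E.
by split => [[->]|/eqP]; rewrite ?subrr // subr_eq0 => /eqP ->.
Qed.
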